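(* Let $M,N$ be finite-dimensional $\Pi$-modules. Then $\dim\operatorname{Ext}^1_\Pi(M,N)=\dim\operatorname{Coker}T_{M;N}+\dim\operatorname{Coker}T_{N;M}$. In particular, $\operatorname{Ext}^1_\Pi(M,N)=0$ if and only if both $T_{M;N}$ and $T_{N;M}$ are surjective.
   Context: $K$ is an algebraically closed field, $Q=(I,\Omega)$ a finite quiver without oriented cycles (so $KQ$ is finite-dimensional) and without loops, and $\Pi$ its preprojective algebra ($K\overline Q$ modulo the ideal generated by $\sum_{h\in\Omega}(hh^{op}-h^{op}h)$, where $\overline Q$ has arrows $\Omega\cup\{h^{op}\}$). Let $\tau$ be the Auslander–Reiten translation on finite-dimensional $KQ$-modules; equivalently $\tau=\epsilon\Phi^+$ where $\Phi^+$ is the Bernstein–Gelfand–Ponomarev Coxeter functor and $\epsilon$ is twisting by the automorphism of $KQ$ multiplying every arrow by $-1$. By Ringel, finite-dimensional $\Pi$-modules are equivalent to pairs $(M,\theta)$ with $M$ a $KQ$-module and $\theta\in\operatorname{Hom}_Q(M,\tau M)$ (a ''$\tau$-datum''), morphisms $(M,\theta)\to(N,\theta')$ being $f\in\operatorname{Hom}_Q(M,N)$ with $\theta'f=\tau(f)\theta$; here $M=\pi_Q(\cdot)$ is the restriction of the $\Pi$-module to $KQ\subseteq\Pi$. For $\Pi$-modules $M,N$ with $\tau$-data $\theta,\theta'$, define $T_{M;N}:\operatorname{Hom}_Q(\pi_QM,\pi_QN)\to\operatorname{Hom}_Q(\pi_QM,\tau\pi_QN)$ by $f\mapsto\tau(f)\circ\theta-\theta'\circ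 f$. *)

From HB Require Import structures.
From mathcomp Require Import all_boot all_order all_algebra.
Set Implicit Arguments. Unset Strict Implicit. Unset Printing Implicit Defensive.
Import Order.TTheory GRing.Theory Num.Theory.
Local Open Scope ring_scope.

Record quiver := Quiver {
  nV : nat;
  Arr : finType;
  src : Arr -> 'I_nV;
  tgt : Arr -> 'I_nV }.

Definition no_oriented_cycles (Q : quiver) : Prop :=
  forall (x : 'I_(nV Q)) (s : seq 'I_(nV Q)),
    path (fun a b => [exists h : Arr Q, (src h == a) && (tgt h == b)]) x s ->
    last x s = x -> s = [::].

Definition no_loops (Q : quiver) : Prop := forall h : Arr Q, src h != tgt h.

(* A finite-dimensional module over the preprojective algebra Pi of Q,
   i.e. a representation of the double quiver satisfying the relation
   sum_h (h h^op - h^op h) = 0.  It is given in a basis adapted to the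
   vertex decomposition M = (+)_i e_i M: [plab c] is the vertex of the
   c-th basis vector; matrices act on column vectors.
   [pX h] is the action of the arrow h (from e_{src h}M to e_{tgt h}M),
   [pY h] the action of h^op (from e_{tgt h}M to e_{src h}M).
   The underlying KQ-module pi_Q M is (pdim, plab, pX). *)
Record PiMod (K : fieldType) (Q : quiver) := PiModule {
  pdim : nat;
  plab : 'I_pdim -> 'I_(nV Q);
  pX : Arr Q -> 'M[K]_pdim;
  pY : Arr Q -> 'M[K]_pdim;
  pX_supp : forall h r c, pX h r c != 0 -> (plab r == tgt h) && (plab c == src h);
  pY_supp : forall h r c, pY h r c != 0 -> (plab r == src h) && (plab c == tgt h);
  prel : \sum_(h : Arr Q) (pX h *m pY h - pY h *m pX h) = 0 }.

Arguments plab {K Q} p _.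
Arguments pX {K Q} p _.
Arguments pY {K Q} p _.
Arguments pdim {K Q} p.

Section Defs.
Variables (K : fieldType) (Q : quiver) (M N : PiMod K Q).

Local Notation dM := (pdim M).
Local Notation dN := (pdim N).
Local Notation mx := 'M[K]_(dN, dM).

Definition mask (i j : 'I_(nV Q)) (F : mx) : mx :=
  \matrix_(r, c) (if (plab N r == j) && (plab M c == i) then 0 else F r c).

Definition mask_diag (F : mx) : mx :=
  \matrix_(r, c) (if plab N r == plab M c then 0 else F r c).

(* Hom_Q(pi_Q M, pi_Q N): vertex-preserving F with X^N_h F = F X^M_h. *)
Definition hom_obs (F : mx) : mx * {ffun Arr Q -> mx} :=
  (mask_diag F, [ffun h => pX N h *m F - F *m pX M h]).
Definition homQ : {vspace mx} := lker (linfun hom_obs).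

(* Ext^1_Pi(M,N), computed from extensions 0 -> N -> E -> M -> 0:
   E = N (+) M (vertexwise), arrows act by block matrices
   [[X^N_h, dX_h],[0, X^M_h]], [[Y^N_h, dY_h],[0, Y^M_h]].
   Cocycles: (dX,dY) with the right vertex support such that E satisfies
   the preprojective relation (only the off-diagonal block is nontrivial). *)
Definition ext_obs (d : {ffun Arr Q -> mx} * {ffun Arr Q -> mx}) :
  ({ffun Arr Q -> mx} * {ffun Arr Q -> mx}) * mx :=
  (([ffun h => mask (src h) (tgt h) (d.1 h)],
    [ffun h => mask (tgt h) (src h) (d.2 h)]),
   \sum_(h : Arr Q) (pX N h *m d.2 h + d.1 h *m pY M h
                      - pY N h *m d.1 h - d.2 h *m pX M h)).
Definition ext_cocycles := lker (linfun ext_obs).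

(* Split extensions (coboundaries): conjugation by [[1, F],[0,1]],
   F vertex-preserving. *)
Definition cob (F : mx) : {ffun Arr Q -> mx} * {ffun Arr Q -> mx} :=
  ([ffun h => pX N h *m F - F *m pX M h], [ffun h => pY N h *m F - F *m pY M h]).
Definition vdiag : {vspace mx} := lker (linfun mask_diag).
Definition ext_coboundaries := (linfun cob @: vdiag)%VS.

Definition dimExt1 : nat := (\dim ext_cocycles - \dim ext_coboundaries)%N.

(* Hom_Q(pi_Q M, tau pi_Q N), via Ringel's natural identification
   Hom_Q(M, tau N) = D Ext^1_Q(N, M): families g_h : e_{tgt h}M -> e_{src h}N
   with sum_h (g_h X^M_h - X^N_h g_h) = 0.  Under it the tau-datum theta of
   a Pi-module corresponds to (Y_h)_h. *)
Definition tau_obs (g : {ffun Arr Q -> mx}) : {ffun Arr Q -> mx} * mx :=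
  ([ffun h => mask (tgt h) (src h) (g h)],
   \sum_(h : Arr Q) (g h *m pX M h - pX N h *m g h)).
Definition HomTau : {vspace {ffun Arr Q -> mx}} := lker (linfun tau_obs).

(* T_{M;N}(f) = tau(f) o theta - theta' o f *)
Definition Tmap (F : mx) : {ffun Arr Q -> mx} :=
  [ffun h => F *m pY M h - pY N h *m F].

Definition imT : {vspace {ffun Arr Q -> mx}} := (linfun Tmap @: homQ)%VS.

Definition dimCokerT : nat := (\dim HomTau - \dim imT)%N.

Definition T_surjective : Prop := (HomTau <= imT)%VS.

End Defs.

From Pilot Require Import Defs.
From HB Require Import structures.
From mathcomp Require Import all_boot all_order all_algebra.
From mathcomp Require Import ring zify.
Set Implicit Arguments. Unset Strict Implicit. Unset Printing Implicit Defensive.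
Import GRing.Theory.
Local Open Scope ring_scope.

(* Everything is a dimension count in spaces of matrices.  Let Z(M,N) >= B(M,N)
   be the cocycles and coboundaries computing Ext^1_Pi(M,N), C(M,N) the families
   (g_h) supported on the blocks e_{src h} N <- e_{tgt h} M, and D(M,N) the
   vertex-preserving maps M -> N.  The cochains of Ext^1_Pi(M,N) are
   C(N,M)^T x C(M,N), and under the trace pairing the preprojective relation on
   them is adjoint to the coboundary map of (N,M); likewise the relation cutting
   Hom_Q(M, tau N) out of C(M,N) is adjoint to G |-> (X^M_h G - G X^N_h)_h on
   D(N,M).  Adjoint maps for nondegenerate pairings have equal rank, so
   rank-nullity gives
     dim Z(M,N) + dim B(N,M) = dim C(M,N) + dim C(N,M),
     dim Hom_Q(M, tau N) + dim D(N,M) - dim Hom_Q(N,M) = dim C(M,N),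
   and with dim B(M,N) = dim D(M,N) - dim Hom_Pi(M,N) and
   dim Im T_{M;N} = dim Hom_Q(M,N) - dim Hom_Pi(M,N) the formula follows. *)

Section RankDuality.
Variable K : fieldType.
Import VectorInternalTheory.

Lemma dimv_limg (E F : vectType K) (f : 'Hom(E, F)) : \dim (limg f) = \rank (f2mx f).
Proof. by rewrite unlock /dimv /= genmxE (eqmxMr _ (genmxE _)) mul1mx. Qed.

Lemma lfun_r2v (E F : vectType K) (f : 'Hom(E, F)) x : f (r2v x) = r2v (x *m f2mx f).
Proof. by rewrite unlock /= r2vK. Qed.

Definition gram (E E' : vectType K) (b : E -> E' -> K) : 'M_(dim E, dim E') :=
  \matrix_(i, j) b (r2v (delta_mx 0 i)) (r2v (delta_mx 0 j)).

Lemma gramE (E E' : vectType K) (b : {bilinear E -> E' -> K | *%R & *%R}) x y :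
  b (r2v x) (r2v y) = (x *m gram b *m y^T) 0 0.
Proof.
rewrite {1}[x]row_sum_delta {1}[y]row_sum_delta !linear_sum mxE /=.
apply: eq_bigr => j _; rewrite linear_sumlz mxE big_distrl; apply: eq_bigr => i _ /=.
by rewrite !linearZ /= linearZl_LR /= !mxE mulrC.
Qed.

Section NondegenerateForm.
Variables (E E' : vectType K) (b : {bilinear E -> E' -> K | *%R & *%R}).

Lemma row_free_gram : (forall u, (forall v, b u v = 0) -> u = 0) -> row_free (gram b).
Proof.
move=> nd; rewrite -kermx_eq0 -submx0; apply/rV_subP => x /sub_kermxP xG.
rewrite submx0; apply/eqP/r2v_inj; rewrite linear0; apply: nd => v.
by rewrite -[v]v2rK gramE xG !mul0mx mxE.
Qed.

Lemma row_free_gram_tr : (forall v, (forall u, b u v = 0) -> v = 0) -> row_free (gram b)^T.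
Proof.
move=> nd; rewrite -kermx_eq0 -submx0; apply/rV_subP => y /sub_kermxP yG.
rewrite submx0; apply/eqP/r2v_inj; rewrite linear0; apply: nd => u.
by rewrite -[u]v2rK gramE -mulmxA -[gram b]trmxK -trmx_mul yG trmx0 mulmx0 mxE.
Qed.

End NondegenerateForm.

Lemma dim_limg_adjoint (E E' F F' : vectType K) (f : 'Hom(E, F)) (g : 'Hom(F', E'))
    (bE : {bilinear E -> E' -> K | *%R & *%R}) (bF : {bilinear F -> F' -> K | *%R & *%R}) :
  (forall v, (forall u, bE u v = 0) -> v = 0) ->
  (forall u, (forall v, bF u v = 0) -> u = 0) ->
  (forall u v, bF (f u) v = bE u (g v)) ->
  \dim (limg f) = \dim (limg g).
Proof.
move=> ndE ndF fg; rewrite !dimv_limg.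
have entry m n (A : 'M[K]_(m, n)) i j :
    (('e_i : 'rV_m) *m A *m ('e_j : 'rV_n)^T) 0 0 = A i j.
  by rewrite trmx_delta -rowE -colE !mxE.
have gramM : f2mx f *m gram bF = gram bE *m (f2mx g)^T.
  apply/matrixP => i j; have := fg (r2v 'e_i) (r2v 'e_j).
  rewrite !lfun_r2v !gramE trmx_mul !mulmxA => e.
  by rewrite -entry !mulmxA e -[RHS]entry !mulmxA.
rewrite -(mxrankMfree _ (row_free_gram ndF)) gramM -mxrank_tr trmx_mul trmxK.
by rewrite mxrankMfree // row_free_gram_tr.
Qed.
End RankDuality.

Section SupportedMatrices.
Variable K : fieldType.

Definition keep_mx m n (P : 'I_m -> 'I_n -> bool) (A : 'M[K]_(m, n)) :=
  \matrix_(r, c) (if P r c then A r c else 0).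

Definition supported m n (P : 'I_m -> 'I_n -> bool) (A : 'M[K]_(m, n)) := keep_mx P A = A.

Section FixedPattern.
Variables (m n : nat) (P : 'I_m -> 'I_n -> bool).
Implicit Types A B : 'M[K]_(m, n).

Lemma keep_mx_is_linear : linear (keep_mx P).
Proof.
by move=> a A B; apply/matrixP => r c; rewrite !mxE; case: (P r c); rewrite ?mulr0 ?addr0.
Qed.
HB.instance Definition _ := GRing.isLinear.Build K _ _ _ (keep_mx P) keep_mx_is_linear.

Lemma supportedP A : supported P A <-> forall r c, ~~ P r c -> A r c = 0.
Proof.
split=> [/matrixP sA r c /negbTE nP | sA]; first by rewrite -sA mxE nP.
by apply/matrixP => r c; rewrite mxE; case: ifPn => // /sA ->.
Qed.

Lemma keep_mx_supported A : supported P (keep_mx P A).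
Proof. by apply/supportedP => r c /negbTE nP; rewrite mxE nP. Qed.

Lemma supported0 : supported P 0.
Proof. exact: linear0. Qed.

Lemma supportedD A B : supported P A -> supported P B -> supported P (A + B).
Proof. by rewrite /supported linearD /= => -> ->. Qed.

Lemma supportedB A B : supported P A -> supported P B -> supported P (A - B).
Proof. by rewrite /supported linearB /= => -> ->. Qed.

Lemma supported_sum (I : finType) (A : I -> 'M[K]_(m, n)) :
  (forall i, supported P (A i)) -> supported P (\sum_i A i).
Proof. by move=> sA; rewrite /supported linear_sum /=; apply: eq_bigr => i _; apply: sA. Qed.

End FixedPattern.

Lemma supported_mul m n p (P1 : 'I_m -> 'I_n -> bool) (P2 : 'I_n -> 'I_p -> bool)
    (P : 'I_m -> 'I_p -> bool) (A : 'M[K]_(m, n)) (B : 'M[K]_(n, p)) :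
  (forall r k c, P1 r k -> P2 k c -> P r c) ->
  supported P1 A -> supported P2 B -> supported P (A *m B).
Proof.
move=> P12 /supportedP sA /supportedP sB; apply/supportedP => r c nP.
rewrite mxE big1 // => k _.
have [P1rk | /sA -> //] := boolP (P1 r k); last by rewrite mul0r.
have [P2kc | /sB -> //] := boolP (P2 k c); last by rewrite mulr0.
by move: nP; rewrite (P12 _ _ _ P1rk P2kc).
Qed.

End SupportedMatrices.

Section TracePairings.
Variable K : fieldType.

Definition trace_pairing m n (A : 'M[K]_(m, n)) (B : 'M[K]_(n, m)) := \tr (A *m B).

Lemma trace_pairing_is_bilinear m n : bilinear_for
  (GRing.Scale.Law.clone _ _ *%R _) (GRing.Scale.Law.clone _ _ *%R _) (@trace_pairing m n).
Proof.
split=> [B|A] a x y; rewrite /trace_pairing.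
  by rewrite mulmxDl -scalemxAl mxtraceD mxtraceZ.
by rewrite mulmxDr -scalemxAr mxtraceD mxtraceZ.
Qed.
HB.instance Definition _ m n :=
  bilinear_isBilinear.Build K _ _ _ _ _ (@trace_pairing m n) (trace_pairing_is_bilinear m n).

Lemma mxtrace_mul_delta m n (A : 'M[K]_(m, n)) r c : \tr (A *m delta_mx c r) = A r c.
Proof.
rewrite -[delta_mx c r](mul_delta_mx (0 : 'I_1)) mulmxA mxtrace_mulC mulmxA trace_mx11.
by rewrite -rowE -colE !mxE.
Qed.

Lemma trace_pairing_eq0l m n (A : 'M[K]_(m, n)) :
  (forall B, trace_pairing A B = 0) -> A = 0.
Proof. by move=> A0; apply/matrixP => r c; rewrite mxE -mxtrace_mul_delta; apply: A0. Qed.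

Lemma trace_pairing_eq0r m n (B : 'M[K]_(n, m)) :
  (forall A, trace_pairing A B = 0) -> B = 0.
Proof.
move=> B0; apply: trace_pairing_eq0l => A.
by rewrite /trace_pairing mxtrace_mulC; apply: B0.
Qed.

Lemma mxtrace_mul_keep m n (P : 'I_m -> 'I_n -> bool) (P' : 'I_n -> 'I_m -> bool)
    (A : 'M[K]_(m, n)) (B : 'M[K]_(n, m)) :
  (forall r c, P' c r -> P r c) -> supported P' B -> \tr (keep_mx P A *m B) = \tr (A *m B).
Proof.
move=> PP' /supportedP sB; rewrite /mxtrace; apply: eq_bigr => r _; rewrite !mxE.
apply: eq_bigr => c _; rewrite mxE; case: ifPn => // nP; rewrite sB ?mulr0 //.
by apply: contra nP; apply: PP'.
Qed.

Section FamilyPairing.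
Variables (I : finType) (m n : nat).
Local Notation fam m n := {ffun I -> 'M[K]_(m, n)}.

Definition fam_pairing (u : fam m n) (v : fam n m) := \sum_i trace_pairing (u i) (v i).

Lemma fam_pairing_is_bilinear : bilinear_for
  (GRing.Scale.Law.clone _ _ *%R _) (GRing.Scale.Law.clone _ _ *%R _) fam_pairing.
Proof.
split=> [v|u] a x y; rewrite /fam_pairing /= big_distrr -big_split;
  by apply: eq_bigr => i _; rewrite !ffunE ?linearPl ?linearPr.
Qed.
HB.instance Definition _ :=
  bilinear_isBilinear.Build K _ _ _ _ _ fam_pairing fam_pairing_is_bilinear.

Lemma fam_pairing_eq0r (v : fam n m) : (forall u, fam_pairing u v = 0) -> v = 0.
Proof.
move=> v0; apply/ffunP => i; rewrite ffunE; apply: trace_pairing_eq0r => A.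
have := v0 [ffun j => if j == i then A else 0].
rewrite /fam_pairing (bigD1 i) //= big1 ?addr0 => [|j /negbTE ji]; first by rewrite ffunE eqxx.
by rewrite ffunE ji linear0l.
Qed.

Definition cochain_pairing (d : fam m n * fam m n) (e : fam n m * fam n m) :=
  fam_pairing d.1 e.2 - fam_pairing d.2 e.1.

Lemma cochain_pairing_is_bilinear : bilinear_for
  (GRing.Scale.Law.clone _ _ *%R _) (GRing.Scale.Law.clone _ _ *%R _) cochain_pairing.
Proof.
split=> [e|d] a x y; rewrite /cochain_pairing /= ?linearPl ?linearPr /=; ring.
Qed.
HB.instance Definition _ :=
  bilinear_isBilinear.Build K _ _ _ _ _ cochain_pairing cochain_pairing_is_bilinear.

Lemma cochain_pairing_eq0r e : (forall d, cochain_pairing d e = 0) -> e = 0.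
Proof.
move=> e0; case: e e0 => e1 e2 e0; congr (_, _); apply: fam_pairing_eq0r => u.
  apply/eqP; rewrite -oppr_eq0.
  by have := e0 (0, u); rewrite /cochain_pairing linear0l sub0r => ->.
by have := e0 (u, 0); rewrite /cochain_pairing linear0l subr0.
Qed.

End FamilyPairing.

Definition ffun_trmx (I : finType) m n (u : {ffun I -> 'M[K]_(m, n)}) :
  {ffun I -> 'M[K]_(n, m)} := [ffun i => (u i)^T].

Lemma ffun_trmx_is_linear (I : finType) m n : linear (@ffun_trmx I m n).
Proof. by move=> a u v; apply/ffunP => i; rewrite !ffunE linearP. Qed.
HB.instance Definition _ (I : finType) m n :=
  GRing.isLinear.Build K _ _ _ (@ffun_trmx I m n) (@ffun_trmx_is_linear I m n).

End TracePairings.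

Section Projections.
Variable K : fieldType.

Lemma lker_pair (V W1 W2 : vectType K) (f : {linear V -> (W1 * W2)%type}) :
  lker (linfun f) = (lker (linfun (fst \o f)) :&: lker (linfun (snd \o f)))%VS.
Proof. by apply/vspaceP => x; rewrite memv_cap !memv_ker !lfunE /=; case: (f x). Qed.

Lemma limg_projection (V : vectType K) (f : 'Hom(V, V)) (U : {vspace V}) :
  (forall v, f v \in U) -> (forall u, u \in U -> f u = u) -> limg f = U.
Proof.
move=> fU fid; apply/vspaceP => v; apply/memv_imgP/idP => [[w _ ->] // | Uv].
by exists v; rewrite ?memvf ?fid.
Qed.

End Projections.

Section PreprojectiveExt.
Variables (K : fieldType) (Q : quiver).
Implicit Types M N : PiMod K Q.
Local Notation mx M N := 'M[K]_(pdim N, pdim M).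
Local Notation fam M N := {ffun Arr Q -> mx M N}.

Definition vertex_block M N i j (r : 'I_(pdim N)) (c : 'I_(pdim M)) :=
  (plab N r == i) && (plab M c == j).
Definition diag_block M N (r : 'I_(pdim N)) (c : 'I_(pdim M)) := plab N r == plab M c.
Arguments vertex_block : clear implicits.
Arguments diag_block : clear implicits.

Lemma pX_supported N h : supported (vertex_block N N (tgt h) (src h)) (pX N h).
Proof. by apply/supportedP => r c; apply: contraNeq; apply: pX_supp. Qed.

Lemma pY_supported N h : supported (vertex_block N N (src h) (tgt h)) (pY N h).
Proof. by apply/supportedP => r c; apply: contraNeq; apply: pY_supp. Qed.

Arguments pX_supported : clear implicits.
Arguments pY_supported : clear implicits.

Lemma mask_eq0 M N i j (F : mx M N) :
  Defs.mask i j F = 0 <-> supported (vertex_block M N j i) F.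
Proof.
have -> : Defs.mask i j F = F - keep_mx (vertex_block M N j i) F.
  by apply/matrixP => r c; rewrite !mxE /vertex_block; case: ifP; rewrite ?subrr ?subr0.
by rewrite /supported; split=> [/eqP | ->]; rewrite ?subrr // subr_eq0 eq_sym => /eqP.
Qed.

Lemma mask_diag_eq0 M N (F : mx M N) : mask_diag F = 0 <-> supported (diag_block M N) F.
Proof.
have -> : mask_diag F = F - keep_mx (diag_block M N) F.
  by apply/matrixP => r c; rewrite !mxE /diag_block; case: ifP; rewrite ?subrr ?subr0.
by rewrite /supported; split=> [/eqP | ->]; rewrite ?subrr // subr_eq0 eq_sym => /eqP.
Qed.

Lemma supported_block_tr M N i j (F : mx M N) :
  supported (vertex_block M N i j) F -> supported (vertex_block N M j i) F^T.
Proof.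
move/supportedP => sF; apply/supportedP => c r.
by rewrite /vertex_block andbC mxE => /sF.
Qed.

Section BlockProducts.
Variables (M L N : PiMod K Q) (A : mx L N) (B : mx M L).

Lemma supported_block_mul_block i j :
  supported (vertex_block L N i j) A -> supported (vertex_block M L j i) B ->
  supported (diag_block M N) (A *m B).
Proof.
apply: supported_mul => r l c; rewrite /vertex_block /diag_block.
by move=> /andP[/eqP-> _] /andP[_ /eqP->].
Qed.

Lemma supported_diag_mul i j :
  supported (diag_block L N) A -> supported (vertex_block M L i j) B ->
  supported (vertex_block M N i j) (A *m B).
Proof. by apply: supported_mul => r l c; rewrite /vertex_block /diag_block => /eqP-> ->. Qed.

Lemma supported_mul_diag i j :
  supported (vertex_block L N i j) A -> supported (diag_block M L) B ->
  supported (vertex_block M N i j) (A *m B).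
Proof.
apply: supported_mul => r l c; rewrite /vertex_block /diag_block.
by move=> /andP[-> /eqP<-] /eqP-> /=.
Qed.

End BlockProducts.

Section LinearMaps.
Variables M N : PiMod K Q.

Lemma mask_is_linear i j : linear (@Defs.mask K Q M N i j).
Proof.
by move=> a F G; apply/matrixP => r c; rewrite !mxE; case: ifP; rewrite ?mulr0 ?addr0.
Qed.
HB.instance Definition _ i j := GRing.isLinear.Build K _ _ _ (@Defs.mask K Q M N i j)
  (mask_is_linear i j).

Lemma mask_diag_is_linear : linear (@mask_diag K Q M N).
Proof.
by move=> a F G; apply/matrixP => r c; rewrite !mxE; case: ifP; rewrite ?mulr0 ?addr0.
Qed.
HB.instance Definition _ := GRing.isLinear.Build K _ _ _ (@mask_diag K Q M N)
  mask_diag_is_linear.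

Lemma hom_obs_is_linear : linear (@hom_obs K Q M N).
Proof.
move=> a F G; congr (_, _); first exact: linearP.
apply/ffunP => h; rewrite !ffunE mulmxDr mulmxDl -scalemxAr -scalemxAl.
by rewrite scalerBr opprD addrACA.
Qed.
HB.instance Definition _ := GRing.isLinear.Build K _ _ _ (@hom_obs K Q M N)
  hom_obs_is_linear.

Lemma cob_is_linear : linear (@cob K Q M N).
Proof.
move=> a F G; congr (_, _); apply/ffunP => h;
  by rewrite !ffunE mulmxDr mulmxDl -scalemxAr -scalemxAl scalerBr opprD addrACA.
Qed.
HB.instance Definition _ := GRing.isLinear.Build K _ _ _ (@cob K Q M N) cob_is_linear.

Lemma Tmap_is_linear : linear (@Tmap K Q M N).
Proof.
move=> a F G; apply/ffunP => h.
by rewrite !ffunE mulmxDr mulmxDl -scalemxAr -scalemxAl scalerBr opprD addrACA.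
Qed.
HB.instance Definition _ := GRing.isLinear.Build K _ _ _ (@Tmap K Q M N) Tmap_is_linear.

Lemma tau_obs_is_linear : linear (@tau_obs K Q M N).
Proof.
move=> a x y; congr (_, _); first by apply/ffunP => h; rewrite !ffunE linearP.
rewrite /= scaler_sumr -big_split; apply: eq_bigr => h _ /=.
by rewrite !ffunE mulmxDr mulmxDl -scalemxAr -scalemxAl scalerBr opprD addrACA.
Qed.
HB.instance Definition _ := GRing.isLinear.Build K _ _ _ (@tau_obs K Q M N) tau_obs_is_linear.

Lemma ext_obs_is_linear : linear (@ext_obs K Q M N).
Proof.
move=> a [x1 x2] [y1 y2]; congr (_, _, _); try by apply/ffunP => h; rewrite !ffunE linearP.
rewrite /= scaler_sumr -big_split; apply: eq_bigr => h _; rewrite !ffunE.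
rewrite !(mulmxDr, mulmxDl) -!scalemxAr -!scalemxAl.
by apply/matrixP => r c; rewrite !mxE; ring.
Qed.
HB.instance Definition _ := GRing.isLinear.Build K _ _ _ (@ext_obs K Q M N) ext_obs_is_linear.

End LinearMaps.

Definition ext_cochains M N := lker (linfun (fst \o @ext_obs K Q M N)).
Definition ext_defect M N := snd \o @ext_obs K Q M N.
Definition tau_cochains M N := lker (linfun (fst \o @tau_obs K Q M N)).
Definition tau_defect M N := snd \o @tau_obs K Q M N.
Definition hom_defect M N := snd \o @hom_obs K Q M N.
Definition homPi M N := (homQ M N :&: lker (linfun (@Tmap K Q M N)))%VS.
Arguments ext_defect : clear implicits.
Arguments tau_defect : clear implicits.
Arguments hom_defect : clear implicits.

HB.instance Definition _ M N := GRing.Linear.on (ext_defect M N).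
HB.instance Definition _ M N := GRing.Linear.on (tau_defect M N).
HB.instance Definition _ M N := GRing.Linear.on (hom_defect M N).

Lemma ext_cocyclesE M N :
  ext_cocycles M N = (ext_cochains M N :&: lker (linfun (ext_defect M N)))%VS.
Proof. exact: lker_pair. Qed.

Lemma HomTauE M N : HomTau M N = (tau_cochains M N :&: lker (linfun (tau_defect M N)))%VS.
Proof. exact: lker_pair. Qed.

Lemma homQE M N : homQ M N = (vdiag M N :&: lker (linfun (hom_defect M N)))%VS.
Proof. exact: lker_pair. Qed.

Lemma mem_vdiag M N (F : mx M N) : F \in vdiag M N <-> supported (diag_block M N) F.
Proof. by rewrite memv_ker lfunE; split=> [/eqP/mask_diag_eq0 | /mask_diag_eq0/eqP]. Qed.

Lemma mem_tau_cochains M N (g : fam M N) :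
  g \in tau_cochains M N <-> forall h, supported (vertex_block M N (src h) (tgt h)) (g h).
Proof.
rewrite memv_ker lfunE /=; split=> [/eqP/ffunP g0 h | sg].
  by apply/mask_eq0; have := g0 h; rewrite !ffunE.
by apply/eqP/ffunP => h; rewrite !ffunE; apply/mask_eq0.
Qed.

Lemma mem_ext_cochains M N (d : fam M N * fam M N) :
  d \in ext_cochains M N <->
  (forall h, supported (vertex_block M N (tgt h) (src h)) (d.1 h)) /\
  (forall h, supported (vertex_block M N (src h) (tgt h)) (d.2 h)).
Proof.
rewrite memv_ker lfunE /=; split=> [/eqP[/ffunP d1 /ffunP d2] | [s1 s2]].
  by split=> h; apply/mask_eq0; [have := d1 h | have := d2 h]; rewrite !ffunE.
by apply/eqP; congr (_, _); apply/ffunP => h; rewrite !ffunE; apply/mask_eq0.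
Qed.

Definition keep_tau M N (g : fam M N) : fam M N :=
  [ffun h => keep_mx (vertex_block M N (src h) (tgt h)) (g h)].
Arguments keep_tau : clear implicits.
Definition keep_cochain M N (d : fam M N * fam M N) : fam M N * fam M N :=
  ([ffun h => keep_mx (vertex_block M N (tgt h) (src h)) (d.1 h)], keep_tau M N d.2).
Arguments keep_cochain : clear implicits.

Lemma keep_tau_is_linear M N : linear (keep_tau M N).
Proof. by move=> a x y; apply/ffunP => h; rewrite !ffunE linearP. Qed.
HB.instance Definition _ M N := GRing.isLinear.Build K _ _ _ (keep_tau M N)
  (@keep_tau_is_linear M N).

Lemma keep_cochain_is_linear M N : linear (keep_cochain M N).
Proof.
move=> a [x1 x2] [y1 y2]; congr (_, _); last exact: linearP.
by apply/ffunP => h; rewrite !ffunE linearP.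
Qed.
HB.instance Definition _ M N := GRing.isLinear.Build K _ _ _ (keep_cochain M N)
  (@keep_cochain_is_linear M N).

Lemma keep_diag_in_vdiag M N (F : mx M N) : keep_mx (diag_block M N) F \in vdiag M N.
Proof. exact/mem_vdiag/keep_mx_supported. Qed.

Lemma keep_tau_in_tau_cochains M N g : keep_tau M N g \in tau_cochains M N.
Proof. by apply/mem_tau_cochains => h; rewrite ffunE; apply: keep_mx_supported. Qed.

Lemma keep_cochain_in_ext_cochains M N d : keep_cochain M N d \in ext_cochains M N.
Proof. by apply/mem_ext_cochains; split=> h; rewrite ffunE; apply: keep_mx_supported. Qed.

Lemma limg_keep_diag M N : limg (linfun (keep_mx (diag_block M N))) = vdiag M N.
Proof.
apply: limg_projection => [F | F /mem_vdiag sF]; rewrite lfunE //=.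
exact: keep_diag_in_vdiag.
Qed.

Lemma limg_keep_tau M N : limg (linfun (keep_tau M N)) = tau_cochains M N.
Proof.
apply: limg_projection => [g | g /mem_tau_cochains sg]; rewrite lfunE /=.
  exact: keep_tau_in_tau_cochains.
by apply/ffunP => h; rewrite ffunE sg.
Qed.

Lemma limg_keep_cochain M N : limg (linfun (keep_cochain M N)) = ext_cochains M N.
Proof.
apply: limg_projection => [d | [d1 d2] /mem_ext_cochains [s1 s2]]; rewrite lfunE /=.
  exact: keep_cochain_in_ext_cochains.
by congr (_, _); apply/ffunP => h; rewrite ffunE ?s1 ?s2.
Qed.

Lemma cob_in_ext_cochains M N (F : mx M N) : F \in vdiag M N -> cob F \in ext_cochains M N.
Proof.
move/mem_vdiag => sF; apply/mem_ext_cochains; split=> h; rewrite ffunE; apply: supportedB.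
- exact: supported_mul_diag (pX_supported N h) sF.
- exact: supported_diag_mul sF (pX_supported M h).
- exact: supported_mul_diag (pY_supported N h) sF.
- exact: supported_diag_mul sF (pY_supported M h).
Qed.

Lemma Tmap_in_tau_cochains M N (F : mx M N) : F \in vdiag M N -> Tmap F \in tau_cochains M N.
Proof.
move/mem_vdiag => sF; apply/mem_tau_cochains => h; rewrite ffunE; apply: supportedB.
- exact: supported_diag_mul sF (pY_supported M h).
- exact: supported_mul_diag (pY_supported N h) sF.
Qed.

Lemma ext_defect_diag M N d :
  d \in ext_cochains M N -> supported (diag_block M N) (ext_defect M N d).
Proof.
case/mem_ext_cochains => s1 s2; rewrite /ext_defect /=; apply: supported_sum => h.
apply: supportedB; first apply: supportedB; first apply: supportedD.
- exact: supported_block_mul_block (pX_supported N h) (s2 h).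
- exact: supported_block_mul_block (s1 h) (pY_supported M h).
- exact: supported_block_mul_block (pY_supported N h) (s1 h).
- exact: supported_block_mul_block (s2 h) (pX_supported M h).
Qed.

Lemma tau_defect_diag M N g :
  g \in tau_cochains M N -> supported (diag_block M N) (tau_defect M N g).
Proof.
move/mem_tau_cochains => sg; rewrite /tau_defect /=.
apply: supported_sum => h; apply: supportedB.
- exact: supported_block_mul_block (sg h) (pX_supported M h).
- exact: supported_block_mul_block (pX_supported N h) (sg h).
Qed.

Lemma ext_defect_cob M N (F : mx M N) : ext_defect M N (cob F) = 0.
Proof.
rewrite /ext_defect /= (eq_bigr (fun h => (pX N h *m pY N h - pY N h *m pX N h) *m F
    - F *m (pX M h *m pY M h - pY M h *m pX M h))) => [|h _].
  by rewrite sumrB -mulmx_suml -mulmx_sumr !prel mul0mx mulmx0 subrr.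
rewrite !ffunE !(mulmxBr, mulmxBl, mulmxA).
by apply/matrixP => r c; rewrite !mxE; ring.
Qed.

Lemma tau_defect_Tmap M N (F : mx M N) : F \in homQ M N -> tau_defect M N (Tmap F) = 0.
Proof.
rewrite homQE memv_cap memv_ker lfunE => /andP[_ /eqP/ffunP FX].
have XF h : pX N h *m F = F *m pX M h.
  by apply/eqP; rewrite -subr_eq0; have := FX h; rewrite /= !ffunE => ->.
rewrite /tau_defect /= (eq_bigr (fun h => (pX N h *m pY N h - pY N h *m pX N h) *m F
    - F *m (pX M h *m pY M h - pY M h *m pX M h))) => [|h _].
  by rewrite sumrB -mulmx_suml -mulmx_sumr !prel mul0mx mulmx0 subrr.
have YFX : pY N h *m F *m pX M h = pY N h *m pX N h *m F by rewrite -mulmxA -XF mulmxA.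
rewrite !ffunE !(mulmxBr, mulmxBl, mulmxA) YFX XF.
by apply/matrixP => r c; rewrite !mxE; ring.
Qed.

Lemma ext_coboundaries_sub M N : (ext_coboundaries M N <= ext_cocycles M N)%VS.
Proof.
apply/subvP => _ /memv_imgP[F vF ->]; rewrite lfunE ext_cocyclesE memv_cap memv_ker lfunE.
by rewrite cob_in_ext_cochains //= ext_defect_cob.
Qed.

Lemma imT_sub M N : (imT M N <= HomTau M N)%VS.
Proof.
apply/subvP => _ /memv_imgP[F homF ->]; move: (homF); rewrite homQE memv_cap => /andP[vF _].
by rewrite lfunE HomTauE memv_cap Tmap_in_tau_cochains //= memv_ker lfunE /= tau_defect_Tmap.
Qed.

Lemma vdiag_cap_lker_cob M N : (vdiag M N :&: lker (linfun (@cob K Q M N)))%VS = homPi M N.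
Proof.
apply/vspaceP => F; rewrite /homPi homQE !memv_cap !memv_ker !lfunE -andbA /=.
have -> : Tmap F = - (cob F).2 by apply/ffunP => h; rewrite !ffunE opprB.
have -> : hom_defect M N F = (cob F).1 by [].
by rewrite oppr_eq0; case: (cob F).
Qed.

Lemma ext_defect_adjoint M N d (G : mx N M) :
  trace_pairing (ext_defect M N d) G = cochain_pairing d (cob G).
Proof.
rewrite /trace_pairing /cochain_pairing /fam_pairing /ext_defect /=.
rewrite mulmx_suml raddf_sum -sumrB; apply: eq_bigr => h _; rewrite !ffunE /trace_pairing.
have cyc (A : mx N N) (B : mx M N) : \tr (A *m B *m G) = \tr (B *m G *m A).
  by rewrite -mulmxA mxtrace_mulC.
rewrite !(mulmxDl, mulmxBl, mulmxBr, mulNmx, mulmxN, mulmxA, raddfD, raddfB, raddfN) /=.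
by rewrite !cyc; ring.
Qed.

Lemma tau_defect_adjoint M N g (G : mx N M) :
  trace_pairing (tau_defect M N g) G = fam_pairing g (hom_defect N M G).
Proof.
rewrite /trace_pairing /fam_pairing /tau_defect /=.
rewrite mulmx_suml raddf_sum; apply: eq_bigr => h _; rewrite !ffunE /trace_pairing.
have cyc (A : mx N N) (B : mx M N) : \tr (A *m B *m G) = \tr (B *m G *m A).
  by rewrite -mulmxA mxtrace_mulC.
rewrite !(mulmxDl, mulmxBl, mulmxBr, mulNmx, mulmxN, mulmxA, raddfD, raddfB, raddfN) /=.
by rewrite !cyc; ring.
Qed.

Lemma trace_pairing_keep_block M N i j (A : mx M N) (B : mx N M) :
  supported (vertex_block N M j i) B ->
  trace_pairing (keep_mx (vertex_block M N i j) A) B = trace_pairing A B.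
Proof. by apply: mxtrace_mul_keep => r c; rewrite /vertex_block andbC. Qed.

Lemma trace_pairing_keep_diag M N (A : mx M N) (B : mx N M) :
  supported (diag_block M N) A ->
  trace_pairing A (keep_mx (diag_block N M) B) = trace_pairing A B.
Proof.
rewrite /trace_pairing !(mxtrace_mulC A).
by apply: mxtrace_mul_keep => r c; rewrite /diag_block eq_sym.
Qed.

Lemma cochain_pairing_keep M N d e :
  e \in ext_cochains N M -> cochain_pairing (keep_cochain M N d) e = cochain_pairing d e.
Proof.
case/mem_ext_cochains => s1 s2; rewrite /cochain_pairing /fam_pairing.
by congr (_ - _); apply: eq_bigr => h _; rewrite ffunE trace_pairing_keep_block.
Qed.

Lemma fam_pairing_keep_tau M N (g : fam M N) (v : fam N M) :
  (forall h, supported (vertex_block N M (tgt h) (src h)) (v h)) ->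
  fam_pairing (keep_tau M N g) v = fam_pairing g v.
Proof.
by move=> sv; apply: eq_bigr => h _; rewrite ffunE trace_pairing_keep_block.
Qed.

Lemma dim_ext_defect_img M N :
  \dim (linfun (ext_defect M N) @: ext_cochains M N) = \dim (ext_coboundaries N M).
Proof.
rewrite /ext_coboundaries -limg_keep_cochain -limg_keep_diag -!limg_comp.
set f := (linfun (ext_defect M N) \o linfun (keep_cochain M N))%VF.
set g := (linfun (@cob K Q N M) \o linfun (keep_mx (diag_block N M)))%VF.
apply: (@dim_limg_adjoint K _ _ _ _ f g (@cochain_pairing _ _ _ _) (@trace_pairing _ _ _)).
- exact: cochain_pairing_eq0r.
- exact: trace_pairing_eq0l.
move=> d G; rewrite !comp_lfunE !lfunE /=.
rewrite -trace_pairing_keep_diag; last exact/ext_defect_diag/keep_cochain_in_ext_cochains.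
by rewrite ext_defect_adjoint cochain_pairing_keep // cob_in_ext_cochains // keep_diag_in_vdiag.
Qed.

Lemma dim_tau_defect_img M N :
  \dim (linfun (tau_defect M N) @: tau_cochains M N) =
  \dim (linfun (hom_defect N M) @: vdiag N M).
Proof.
rewrite -limg_keep_tau -limg_keep_diag -!limg_comp.
set f := (linfun (tau_defect M N) \o linfun (keep_tau M N))%VF.
set g := (linfun (hom_defect N M) \o linfun (keep_mx (diag_block N M)))%VF.
apply: (@dim_limg_adjoint K _ _ _ _ f g (@fam_pairing _ _ _ _) (@trace_pairing _ _ _)).
- exact: fam_pairing_eq0r.
- exact: trace_pairing_eq0l.
move=> u G; rewrite !comp_lfunE !lfunE /=.
rewrite -trace_pairing_keep_diag; last exact/tau_defect_diag/keep_tau_in_tau_cochains.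
rewrite tau_defect_adjoint fam_pairing_keep_tau // => h.
by have /mem_ext_cochains[+ _] := cob_in_ext_cochains (keep_diag_in_vdiag G); apply.
Qed.

Lemma dim_ext_cochains M N :
  \dim (ext_cochains M N) = (\dim (tau_cochains M N) + \dim (tau_cochains N M))%N.
Proof.
pose sndf := linfun (@snd (fam M N) (fam M N)).
pose trf := (linfun (@ffun_trmx K (Arr Q) _ _) \o linfun (@fst (fam M N) (fam M N)))%VF.
rewrite -(limg_ker_dim sndf) addnC; congr (_ + _)%N.
  congr (\dim _); apply/vspaceP => g; apply/idP/idP.
    case/memv_imgP => d /mem_ext_cochains[_ s2] ->.
    by rewrite lfunE; apply/mem_tau_cochains.
  move/mem_tau_cochains => sg; apply/memv_imgP; exists (0, g); last by rewrite lfunE.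
  by apply/mem_ext_cochains; split=> h //; rewrite ffunE; apply: supported0.
rewrite -(@limg_dim_eq _ _ _ trf).
  congr (\dim _); apply/vspaceP => g; apply/idP/idP.
    case/memv_imgP => d; rewrite memv_cap memv_ker => /andP[/mem_ext_cochains[s1 _] _] ->.
    apply/mem_tau_cochains => h.
    by rewrite /trf comp_lfunE !lfunE /= ffunE; apply: supported_block_tr.
  move/mem_tau_cochains => sg; apply/memv_imgP; exists (ffun_trmx g, 0).
    rewrite memv_cap memv_ker lfunE /= eqxx andbT; apply/mem_ext_cochains.
    by split=> h; rewrite ffunE; [exact (supported_block_tr (sg h)) | exact: supported0].
  by rewrite /trf comp_lfunE !lfunE /=; apply/ffunP => h; rewrite !ffunE trmxK.
apply/eqP; rewrite -subv0; apply/subvP => -[d1 d2].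
rewrite !memv_cap !memv_ker memv0 /trf comp_lfunE !lfunE /= => /andP[/andP[_ /eqP->] /eqP d0].
apply/eqP; congr (_, _); apply/ffunP => h; move/ffunP: d0 => /(_ h).
by rewrite !ffunE => /(congr1 trmx); rewrite trmxK trmx0.
Qed.

Lemma dim_ext_cocycles M N :
  (\dim (ext_cocycles M N) + \dim (ext_coboundaries N M) =
   \dim (tau_cochains M N) + \dim (tau_cochains N M))%N.
Proof. by rewrite ext_cocyclesE -dim_ext_defect_img limg_ker_dim dim_ext_cochains. Qed.

Lemma dim_ext_coboundaries M N :
  (\dim (ext_coboundaries M N) + \dim (homPi M N) = \dim (vdiag M N))%N.
Proof. by rewrite -vdiag_cap_lker_cob addnC limg_ker_dim. Qed.

Lemma dim_HomTau M N :
  (\dim (HomTau M N) + \dim (linfun (hom_defect N M) @: vdiag N M) =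
   \dim (tau_cochains M N))%N.
Proof. by rewrite HomTauE -dim_tau_defect_img limg_ker_dim. Qed.

Lemma dim_homQ M N :
  (\dim (homQ M N) + \dim (linfun (hom_defect M N) @: vdiag M N) = \dim (vdiag M N))%N.
Proof. by rewrite homQE limg_ker_dim. Qed.

Lemma dim_imT M N : (\dim (imT M N) + \dim (homPi M N) = \dim (homQ M N))%N.
Proof. by rewrite addnC limg_ker_dim. Qed.

Lemma T_surjective_coker0 M N : T_surjective M N <-> dimCokerT M N = 0%N.
Proof.
rewrite /T_surjective /dimCokerT; split=> [/dimvS le | /eqP].
  by apply/eqP; rewrite subn_eq0.
rewrite subn_eq0 => le; have /eqP -> // : imT M N == HomTau M N.
by rewrite eqEdim imT_sub.
Qed.

End PreprojectiveExt.

Theorem corollary9p1 (K : closedFieldType) (Q : quiver)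
  (hQ : no_oriented_cycles Q) (hL : no_loops Q) (M N : PiMod K Q) :
  dimExt1 M N = (dimCokerT M N + dimCokerT N M)%N /\
  (dimExt1 M N = 0%N <-> T_surjective M N /\ T_surjective N M).
Proof.
have cocycles := dim_ext_cocycles M N.
have [coboundsMN coboundsNM] := (dim_ext_coboundaries M N, dim_ext_coboundaries N M).
have [homTauMN homTauNM] := (dim_HomTau M N, dim_HomTau N M).
have [homQMN homQNM] := (dim_homQ M N, dim_homQ N M).
have [imTMN imTNM] := (dim_imT M N, dim_imT N M).
have cob_le := dimvS (ext_coboundaries_sub M N).
have [imT_leMN imT_leNM] := (dimvS (imT_sub M N), dimvS (imT_sub N M)).
rewrite !T_surjective_coker0 /dimExt1 /dimCokerT.
by split; lia.
Qed.
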